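(* Let $U\subset\mathbb R^m$ be open and assume (A1), (A2)–(A3) for all $u\in U$ and all unit $d$, (A4) at every $u\in U$, and condition (B) at every $u\in U$. Let $u_0\in U$ and $x_0\in S(u_0)$. Then the function $w:U\to\mathbb R$, $w(u)=f(x_0,u)$, is a viscosity subsolution at $u_0$ of $-\nabla w(u)\cdot d+\inf_{x\in S(u)}D_df_x(u)=0$ for every unit $d\in\mathbb R^m$, i.e. $-\eta\cdot d+\inf_{x\in S(u_0)}D_df_x(u_0)\le0$ for every $\eta\in\mathcal J^+w(u_0)$.
   Context: $\mathfrak X$ real Banach space, $X\subset\mathfrak X$ nonempty, $f:X\times U\to\mathbb R$, $\Phi:U\to2^X$, $v(u)=\inf_{x\in\Phi(u)}f(x,u)$, $S(u)=\{x\in\Phi(u):f(x,u)=v(u)\}$, $f_x(u)=f(x,u)$, $D_df_x(u)=\lim_{s\downarrow0}\frac{f(x,u+sd)-f(x,u)}{s}$. $\mathcal J^+w(u_0)=\{p\in\mathbb R^m:\limsup_{u\to u_0}\frac{w(u)-w(u_0)-p\cdot(u-u_0)}{|u-u_0|}\le0\}$. (A1): $f$ continuous and for each $u$ there exist $\alpha$, compact $C$ with $\emptyset\ne\{x\in\Phi(u'):f(x,u')\le\alpha\}\subset C$ for $u'$ near $u$. (A2) at $u$, $d$: $D_df_x(u)$ exists for $x\in\Phi(u)$ and $\inf_{x\in S(u)}D_df_x(u)>-\infty$. (A3) at $u$, $d$: $\{x_k\}\subset\Phi(u)$, $x_k\to x$ implies $D_df_x(u)\le\limsup_kD_df_{x_k}(u)$.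 (A4) at $u$: there exist $C_0>0$ and a neighborhood $\mathcal N$ of $u$ with $\inf_{x\in S(u_1)}D_df_x(u_1)>-C_0$ for $u_1\in\mathcal N$ and unit $d$. Condition (B): $\Phi$ constant equal to a nonempty closed subset of $X$, or $\Phi(u)=\{x\in X:G(x,u)\in K\}$ with $G$ continuous into a topological vector space, $K$ closed with nonempty interior, and $G(x,u)\in\operatorname{int}K$ for $x\in S(u)$. *)

From HB Require Import structures.
From mathcomp Require Import all_boot all_order all_algebra.
From mathcomp Require Import all_classical all_reals all_analysis.
Set Implicit Arguments. Unset Strict Implicit. Unset Printing Implicit Defensive.
Import Order.TTheory GRing.Theory Num.Theory.
Import numFieldNormedType.Exports.
Local Open Scope classical_set_scope.
Local Open Scope ring_scope.

Definition dotv (R : realType) (m : nat) (p q : 'rV[R]_m) : R :=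
  \sum_(i < m) p ord0 i * q ord0 i.
Definition enorm (R : realType) (m : nat) (p : 'rV[R]_m) : R :=
  Num.sqrt (dotv p p).

Definition dquot (R : realType) (E : Type) (m : nat)
  (f : E -> 'rV[R]_m -> R) (x : E) (u d : 'rV[R]_m) : R -> R :=
  fun s => (f x (u + s *: d) - f x u) / s.

Definition has_Dd (R : realType) (E : Type) (m : nat)
  (f : E -> 'rV[R]_m -> R) (x : E) (u d : 'rV[R]_m) : Prop :=
  cvg (dquot f x u d @ 0^'+).

Definition Dd (R : realType) (E : Type) (m : nat)
  (f : E -> 'rV[R]_m -> R) (x : E) (u d : 'rV[R]_m) : R :=
  lim (dquot f x u d @ 0^'+).

Definition valfun (R : realType) (E : Type) (m : nat)
  (f : E -> 'rV[R]_m -> R) (Phi : 'rV[R]_m -> set E) (u : 'rV[R]_m) : R :=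
  inf [set f x u | x in Phi u].

Definition solset (R : realType) (E : Type) (m : nat)
  (f : E -> 'rV[R]_m -> R) (Phi : 'rV[R]_m -> set E) (u : 'rV[R]_m) : set E :=
  [set x | Phi u x /\ f x u = valfun f Phi u].

Definition infDd (R : realType) (E : Type) (m : nat)
  (f : E -> 'rV[R]_m -> R) (Phi : 'rV[R]_m -> set E) (u d : 'rV[R]_m) : \bar R :=
  ereal_inf [set (Dd f x u d)%:E | x in solset f Phi u].

(* superdifferential J^+ w(u0): limsup_{u -> u0} (w u - w u0 - p.(u-u0))/|u-u0| <= 0,
   written out with epsilon-delta (u ranging in U, u <> u0) *)
Definition superdiff (R : realType) (m : nat) (U : set 'rV[R]_m)
  (w : 'rV[R]_m -> R) (u0 : 'rV[R]_m) : set 'rV[R]_m :=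
  [set p | forall eps : R, 0 < eps -> exists2 delta : R, 0 < delta &
     forall u, U u -> u != u0 -> enorm (u - u0) < delta ->
       (w u - w u0 - dotv p (u - u0)) / enorm (u - u0) <= eps].

Definition condA1 (R : realType) (E : normedModType R) (m : nat)
  (X : set E) (U : set 'rV[R]_m) (f : E -> 'rV[R]_m -> R)
  (Phi : 'rV[R]_m -> set E) : Prop :=
  {within X `*` U, continuous (fun p : E * 'rV[R]_m => f p.1 p.2)} /\
  forall u, U u -> exists alpha : R, exists2 C : set E, compact C &
    \forall u' \near u, U u' /\
      [set x | Phi u' x /\ f x u' <= alpha] !=set0 /\
      [set x | Phi u' x /\ f x u' <= alpha] `<=` C.

Definition condA2 (R : realType) (E : Type) (m : nat)
  (f : E -> 'rV[R]_m -> R) (Phi : 'rV[R]_m -> set E) (u d : 'rV[R]_m) : Prop :=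
  (forall x, Phi u x -> has_Dd f x u d) /\ (-oo < infDd f Phi u d)%E.

Definition condA3 (R : realType) (E : normedModType R) (m : nat)
  (f : E -> 'rV[R]_m -> R) (Phi : 'rV[R]_m -> set E) (u d : 'rV[R]_m) : Prop :=
  forall (xk : nat -> E) (x : E), (forall k, Phi u (xk k)) -> Phi u x ->
    xk @ \oo --> x ->
    ((Dd f x u d)%:E <= limn_esup (fun k => (Dd f (xk k) u d)%:E))%E.

Definition condA4 (R : realType) (E : Type) (m : nat) (U : set 'rV[R]_m)
  (f : E -> 'rV[R]_m -> R) (Phi : 'rV[R]_m -> set E) (u : 'rV[R]_m) : Prop :=
  exists2 C0 : R, 0 < C0 & exists2 N : set 'rV[R]_m, nbhs u N &
    forall u1 d, N u1 -> U u1 -> enorm d = 1 -> ((- C0)%:E < infDd f Phi u1 d)%E.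

Definition condB (R : realType) (E : normedModType R) (m : nat)
  (X : set E) (U : set 'rV[R]_m) (f : E -> 'rV[R]_m -> R)
  (Phi : 'rV[R]_m -> set E) : Prop :=
  (exists F : set E, [/\ F `<=` X, F !=set0,
      (exists2 Cl : set E, closed Cl & F = X `&` Cl) &
      forall u, U u -> Phi u = F])
  \/
  (exists (Y : topologicalLmodType R) (G : E -> 'rV[R]_m -> Y) (K : set Y),
     [/\ {within X `*` U, continuous (fun p : E * 'rV[R]_m => G p.1 p.2)},
         closed K, interior K !=set0,
         (forall u, U u -> Phi u = [set x | X x /\ K (G x u)]) &
         (forall u x, U u -> solset f Phi u x -> interior K (G x u))]).

From HB Require Import structures.
From mathcomp Require Import all_boot all_order all_algebra.
From mathcomp Require Import all_classical all_reals all_analysis.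
From mathcomp Require Import ring lra.
Import Order.TTheory GRing.Theory Num.Theory.
Import numFieldNormedType.Exports.
Local Open Scope classical_set_scope.
Local Open Scope ring_scope.

(* First, since x0 is a minimizer at u0,
   inf_{x in S(u0)} D_d f_x(u0) <= D_d f_{x0}(u0).  Second, for any function w
   and any eta in the superdifferential J^+ w(u0), every one-sided
   directional derivative of w at u0 along a nonzero direction d satisfies
   D_d w(u0) <= eta . d: along the ray u0 + s d (s > 0 small, which stays in
   the open set U) the superdifferential inequality reads
   (w(u0 + s d) - w(u0))/s <= eta . d + eps |d|, and one passes to the limit. *)

Section EuclideanRays.
Set Implicit Arguments.
Unset Strict Implicit.

Lemma dotvZr (R : realType) (m : nat) (p q : 'rV[R]_m) (s : R) :
  dotv p (s *: q) = s * dotv p q.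
Proof. by rewrite /dotv mulr_sumr; apply: eq_bigr => i _; rewrite !mxE; ring. Qed.

Lemma dotvC (R : realType) (m : nat) (p q : 'rV[R]_m) : dotv p q = dotv q p.
Proof. by apply: eq_bigr => i _; rewrite mulrC. Qed.

Lemma dotv_self_gt0 (R : realType) (m : nat) (p : 'rV[R]_m) :
  p != 0 -> 0 < dotv p p.
Proof.
move=> p_neq0; have [i pi_neq0] : exists i, p ord0 i != 0.
  apply/not_existsP => p_eq0; move/eqP: p_neq0; apply; apply/rowP => i.
  by rewrite mxE; apply/eqP/negbNE/negP/p_eq0.
have sq_ge0 (x : R) : 0 <= x * x by rewrite -expr2 sqr_ge0.
rewrite /dotv (bigD1 i) //= ltr_wpDr //; first by apply: sumr_ge0 => j _.
by rewrite lt_def mulf_neq0 //= sq_ge0.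
Qed.

Lemma enormZ (R : realType) (m : nat) (s : R) (d : 'rV[R]_m) :
  enorm (s *: d) = `|s| * enorm d.
Proof.
by rewrite /enorm dotvZr dotvC dotvZr mulrA -expr2 sqrtrM ?sqrtr_sqr // sqr_ge0.
Qed.

Lemma enorm0 (R : realType) (m : nat) : enorm (0 : 'rV[R]_m) = 0.
Proof. by rewrite -(scale0r (0 : 'rV[R]_m)) enormZ normr0 mul0r. Qed.

Lemma enorm_gt0 (R : realType) (m : nat) (d : 'rV[R]_m) :
  d != 0 -> 0 < enorm d.
Proof. by move=> d_neq0; rewrite /enorm sqrtr_gt0 dotv_self_gt0. Qed.

Lemma ray_eventually_in_open (R : realType) (m : nat) (U : set 'rV[R]_m)
  (u0 d : 'rV[R]_m) :
  open U -> U u0 -> d != 0 ->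
  \forall s \near 0^'+, U (u0 + s *: d) /\ u0 + s *: d != u0.
Proof.
move=> oU Uu0 d_neq0.
have ray_to_u0 : (fun s : R => u0 + s *: d) @ 0^'+ --> u0.
  apply: cvg_within_filter; rewrite -{2}(addr0 u0).
  apply: cvgD; first exact: cvg_cst.
  by rewrite -(scale0r d); apply: cvgZ; [exact: cvg_id | exact: cvg_cst].
near=> s; split.
  by near: s; apply: ray_to_u0; move: oU; rewrite openE; exact.
have s_gt0 : 0 < s by near: s; exact: nbhs_right_gt.
by rewrite -subr_eq0 addrAC subrr add0r scaler_eq0 negb_or d_neq0 gt_eqF.
Unshelve. all: end_near.
Qed.

Lemma dir_deriv_le_superdiff (R : realType) (m : nat) (U : set 'rV[R]_m)
  (w : 'rV[R]_m -> R) (u0 d eta : 'rV[R]_m) :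
  open U -> U u0 -> d != 0 -> superdiff U w u0 eta ->
  let q := fun s : R => (w (u0 + s *: d) - w u0) / s in
  cvg (q @ 0^'+) -> lim (q @ 0^'+) <= dotv eta d.
Proof.
move=> oU Uu0 d_neq0 eta_sup q q_cvg.
have nd_gt0 := enorm_gt0 d_neq0.
(* eps-weakened bound, obtained along the ray for s < delta(eps) *)
suff approx e : 0 < e -> lim (q @ 0^'+) <= dotv eta d + e * enorm d.
  apply/ler_addgt0Pr => e e_gt0.
  by rewrite -[e](@mulfVK _ (enorm d)) ?gt_eqF // approx ?divr_gt0.
move=> e_gt0; have [del del_gt0 near_u0] := eta_sup e e_gt0.
apply: limr_le => //; near=> s.
have s_gt0 : 0 < s by near: s; exact: nbhs_right_gt.
have s_small : s * enorm d < del.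
  by rewrite -ltr_pdivlMr //; near: s; apply: nbhs_right_lt; rewrite divr_gt0.
have [Us ray_neq] : U (u0 + s *: d) /\ u0 + s *: d != u0.
  by near: s; exact: ray_eventually_in_open.
have := near_u0 _ Us ray_neq.
rewrite addrAC subrr add0r enormZ gtr0_norm // dotvZr => /(_ s_small).
rewrite /q ler_pdivrMr ?mulr_gt0 // ler_pdivrMr // => ray_bound.
nra.
Unshelve. all: end_near.
Qed.

End EuclideanRays.

Lemma oppe_addr_le0 (R : realType) (a : R) (y : \bar R) :
  (y <= a%:E)%E -> ((- a)%:E + y <= 0)%E.
Proof.
case: y => [r||] //=; last by rewrite addeNy leNye.
by rewrite lee_fin -EFinD lee_fin => h; lra.
Qed.

Theorem mainTheorem9 (R : realType) (E : completeNormedModType R) (m : nat)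
  (X : set E) (U : set 'rV[R]_m) (f : E -> 'rV[R]_m -> R)
  (Phi : 'rV[R]_m -> set E) :
  X !=set0 ->
  open U ->
  (forall u, U u -> Phi u `<=` X) ->
  condA1 X U f Phi ->
  (forall u d, U u -> enorm d = 1 -> condA2 f Phi u d) ->
  (forall u d, U u -> enorm d = 1 -> condA3 f Phi u d) ->
  (forall u, U u -> condA4 U f Phi u) ->
  condB X U f Phi ->
  forall u0 x0, U u0 -> solset f Phi u0 x0 ->
  forall d : 'rV[R]_m, enorm d = 1 ->
  forall eta, superdiff U (fun u => f x0 u) u0 eta ->
    ((- dotv eta d)%:E + infDd f Phi u0 d <= 0)%E.
Proof.
move=> _ oU _ _ A2 _ _ _ u0 x0 Uu0 Sx0 d d_unit eta eta_sup.
have d_neq0 : d != 0.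
  by apply: contra_eq_neq d_unit => ->; rewrite enorm0 eq_sym oner_neq0.
have inf_le_x0 : (infDd f Phi u0 d <= (Dd f x0 u0 d)%:E)%E.
  by apply: ereal_inf_lbound; exists x0.
have Dx0_exists : has_Dd f x0 u0 d by case: (A2 u0 d Uu0 d_unit) => + _; apply; case: Sx0.
have Dx0_le : Dd f x0 u0 d <= dotv eta d.
  exact: (dir_deriv_le_superdiff oU Uu0 d_neq0 eta_sup Dx0_exists).
by apply/oppe_addr_le0/(le_trans inf_le_x0); rewrite lee_fin.
Qed.
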